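(* Assume $\theta_i<1$ for all $i$ and $\theta_j>0$ for some $j$. Suppose $\mathcal G(C)$ is a star topology with center node $l$ and $0<\theta_l<1$. Then: (i) every equilibrium social power $x^*$ of systems (A) and (B) satisfies: (a) $x^*\in\operatorname{int}\Delta_n$; (b) for $i\in\mathcal V_f$: if $C_{li}=0$ then $x^*_i=1/n$, otherwise $x^*_i>1/n$; (c) for $i\in\mathcal V_p\setminus\{l\}$ with $C_{li}=0$: $x^*_i=\dfrac{n-\sqrt{n^2-4n\theta_i(1-\theta_i)}}{2n\theta_i}$ (in particular $x^*_i$ is the same for all equilibria), and this value is strictly decreasing in $\theta_i$. (ii) If moreover $C_{li}=0$ for all $i\in\mathcal V_p\setminus\{l\}$, then the equilibrium social power is unique and satisfies: (a) $x^*_i=\dfrac{n-\sqrt{n^2-4n\theta_i(1-\theta_i)}}{2n\theta_i}$, strictly decreasing in $\theta_i$, for $i\in\mathcal V_p\setminus\{l\}$; (b) $x^*_l=\dfrac{n-\sqrt{n^2-4n\theta_l(1-\theta_l)\xi^*}}{2n\theta_l}$; (c) $x^*_i=\dfrac1n+\Big(\dfrac{\xi^*}{n}-x^*_l\Big)C_{li}$ for $i\in\mathcal V_f$; where $\xi^*=n-r-n\sum_{j\in\mathcal V_p\setminus\{l\}}x^*_j$ and $r=|\mathcal V_f|$.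
   Context: Let $n\ge 2$, $\mathbf 1_n$ the all-ones vector, $I_n$ the identity matrix, $\Delta_n=\{x\in\mathbb R^n: x\ge 0,\ \mathbf 1_n^Tx=1\}$, $\operatorname{int}\Delta_n=\{x\in\mathbb R^n: x>0,\ \mathbf 1_n^Tx=1\}$. Let $C\in\mathbb R^{n\times n}$ be a nonnegative row-stochastic matrix with zero diagonal, and $\mathcal G(C)$ the digraph on $\{1,\dots,n\}$ with an edge $(i,j)$ iff $C_{ij}>0$. $\mathcal G(C)$ is a star topology with center node $l$ if every edge of $\mathcal G(C)$ is either from $l$ or to $l$ (i.e. $C_{ij}>0$ implies $i=l$ or $j=l$). Let $\theta=(\theta_1,\dots,\theta_n)\in[0,1]^n$, $\Theta=\mathrm{diag}(\theta)$, $W(x)=\mathrm{diag}(x)+(I_n-\mathrm{diag}(x))C$. Let $\mathcal V_f=\{i:\theta_i=0\}$ and $\mathcal V_p=\{i:\theta_i>0\}$. System (A): $x(s+1)=F(x(s))$, $x(0)\in\Delta_n$, where $F(x)=(I_n-\Theta)(I_n-W(x)^T\Theta)^{-1}\mathbf 1_n/n$; an equilibrium is $x^*\in\Delta_n$ with $F(x^* )=x^*$. System (B): $V(k+1)=\Theta W(x(k))V(k)+I_n-\Theta$, $x(k+1)=V(k+1)^T\mathbf 1_n/n$, with $V(0)=I_n$, $x(0)\in\Delta_n$; an equilibrium is a pair $(V^*,x^* )$ with $V^*$ row-stochastic, $x^*\in\Delta_n$, $V^*=\Theta W(x^* )V^*+I_n-\Theta$, $x^*=(V^* )^T\mathbf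 1_n/n$. The equilibrium social powers of (A) and (B) coincide (the fixed points of $F$). *)

(* Real numbers are modelled by an arbitrary real closed
   field R : rcfType (all notions involved are algebraic: matrices, matrix
   inverse, square roots, order), which is more general than the reals. *)
From HB Require Import structures.
From mathcomp Require Import all_boot all_order all_algebra.
Set Implicit Arguments. Unset Strict Implicit. Unset Printing Implicit Defensive.
Import Order.TTheory GRing.Theory Num.Theory.
Local Open Scope ring_scope.

Section Defs.
Variable R : rcfType.
Variable n : nat.

Definition in_simplex (x : 'cV[R]_n) : Prop :=
  (forall i, 0 <= x i ord0) /\ \sum_i x i ord0 = 1.

Definition in_int_simplex (x : 'cV[R]_n) : Prop :=
  (forall i, 0 < x i ord0) /\ \sum_i x i ord0 = 1.

Definition nonneg_mx (A : 'M[R]_n) : Prop := forall i j, 0 <= A i j.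

Definition row_stochastic (A : 'M[R]_n) : Prop :=
  nonneg_mx A /\ forall i, \sum_j A i j = 1.

Definition zero_diag (A : 'M[R]_n) : Prop := forall i, A i i = 0.

Definition star_topology (C : 'M[R]_n) (l : 'I_n) : Prop :=
  forall i j, 0 < C i j -> i = l \/ j = l.

Definition Theta (theta : 'rV[R]_n) : 'M[R]_n := diag_mx theta.

Definition Wmx (C : 'M[R]_n) (x : 'cV[R]_n) : 'M[R]_n :=
  diag_mx x^T + (1%:M - diag_mx x^T) *m C.

Definition one_n : 'cV[R]_n := const_mx (n%:R^-1).

Definition Fmap (C : 'M[R]_n) (theta : 'rV[R]_n) (x : 'cV[R]_n) : 'cV[R]_n :=
  (1%:M - Theta theta) *m invmx (1%:M - (Wmx C x)^T *m Theta theta) *m one_n.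

(* equilibrium of system (A): x in Delta_n with F(x) = x
   (F(x) being defined, i.e. the matrix I - W(x)^T Theta invertible) *)
Definition equilibrium_A (C : 'M[R]_n) (theta : 'rV[R]_n) (x : 'cV[R]_n) : Prop :=
  in_simplex x /\
  (1%:M - (Wmx C x)^T *m Theta theta) \in unitmx /\
  Fmap C theta x = x.

Definition equilibrium_B (C : 'M[R]_n) (theta : 'rV[R]_n)
    (V : 'M[R]_n) (x : 'cV[R]_n) : Prop :=
  row_stochastic V /\ in_simplex x /\
  V = Theta theta *m Wmx C x *m V + (1%:M - Theta theta) /\
  x = V^T *m one_n.

Definition equilibrium_power (C : 'M[R]_n) (theta : 'rV[R]_n) (x : 'cV[R]_n) : Prop :=
  equilibrium_A C theta x \/ exists V, equilibrium_B C theta V x.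

Definition root_val (t s : R) : R :=
  (n%:R - Num.sqrt (n%:R ^+ 2 - 4%:R * n%:R * t * (1 - t) * s)) / (2%:R * n%:R * t).

Definition gval (t : R) : R := root_val t 1.

End Defs.

(* An equilibrium is x = (I - Theta) z with (I - W(x)^T Theta) z = 1_n / n.  In a
   star, the equation of a leaf i involves only z_i and the outflow
   (1 - x_l) theta_l z_l of the center l.  For a stubborn leaf not fed by the center
   it becomes the quadratic  n theta_i x_i^2 - n x_i + (1 - theta_i) = 0, and for
   the center, once every leaf is of this kind, the same quadratic with last
   coefficient (1 - theta_l) xi; the equilibrium value is the smaller root, the only
   one below 1.  A follower (theta_i = 0) receives 1/n plus C_li times the outflow
   of the center.  These closed forms determine the equilibrium, and conversely
   they solve the equations, which gives existence in part (ii).  Invertibility of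
   I - W(x)^T Theta, i.e. well-posedness of the fixed-point map, comes from
   W(x) being stochastic and theta < 1. *)

From HB Require Import structures.
From mathcomp Require Import all_boot all_order all_algebra.
From mathcomp Require Import ring lra.
Set Implicit Arguments. Unset Strict Implicit. Unset Printing Implicit Defensive.
Import Order.TTheory GRing.Theory Num.Theory.
Local Open Scope ring_scope.

Section Quadratic.
Variables (R : rcfType) (n : nat).
Hypothesis n_gt0 : (0 < n)%N.

Definition quad (t s y : R) : R := n%:R * t * y ^+ 2 - n%:R * y + (1 - t) * s.

Lemma quad_root_val (t s : R) :
  0 < t -> 0 <= n%:R ^+ 2 - 4%:R * n%:R * t * (1 - t) * s ->
  quad t s (root_val n t s) = 0 /\ 2%:R * t * root_val n t s <= 1.
Proof.
move=> t_gt0 D_ge0; set D := _ - _ in D_ge0.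
rewrite /quad /root_val -/D; split.
  apply: (@mulIf _ (4%:R * n%:R * t)); first by rewrite !mulf_neq0 ?gt_eqF ?ltr0n.
  rewrite mul0r; transitivity (Num.sqrt D ^+ 2 - D); last by rewrite sqr_sqrtr ?subrr.
  by rewrite /D; field; rewrite !gt_eqF ?ltr0n.
have -> : 2%:R * t * ((n%:R - Num.sqrt D) / (2%:R * n%:R * t)) = 1 - Num.sqrt D / n%:R.
  by field; rewrite !gt_eqF ?ltr0n.
by rewrite lerBlDr lerDl divr_ge0 ?sqrtr_ge0 ?ler0n.
Qed.

Lemma root_val_unique (t s y : R) :
  0 < t -> quad t s y = 0 -> 2%:R * t * y <= 1 -> y = root_val n t s.
Proof.
move=> t_gt0 q0 ty_le1.
have disc : n%:R ^+ 2 - 4%:R * n%:R * t * (1 - t) * s = (n%:R * (1 - 2%:R * t * y)) ^+ 2.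
  apply/eqP; rewrite -subr_eq0 -(mulr0 (- (4%:R * n%:R * t))) -q0; apply/eqP.
  by rewrite /quad; ring.
rewrite /root_val disc sqrtr_sqr ger0_norm; last by rewrite mulr_ge0 ?ler0n ?subr_ge0.
by field; rewrite !gt_eqF ?ltr0n.
Qed.

Lemma quad_root_lt1 (t s y : R) :
  0 < t < 1 -> s <= n%:R -> y < 1 -> quad t s y = 0 -> y = root_val n t s.
Proof.
move=> /andP[t_gt0 t_lt1] s_le y_lt1 q0; apply: root_val_unique => //.
have n_pos : (0 : R) < n%:R by rewrite ltr0n.
rewrite leNgt; apply/negP => ty_gt1.
have e : n%:R * t - n%:R + (1 - t) * s =
  quad t s y + n%:R * ((1 - y) * (t * (1 + y) - 1)) by rewrite /quad; ring.
have s_defect : (1 - t) * (s - n%:R) <= 0 by apply: mulr_ge0_le0; lra.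
have y_gt0 : 0 < y by nra.
have : 0 < n%:R * ((1 - y) * (t * (1 + y) - 1)) by rewrite !mulr_gt0 // ?subr_gt0; nra.
lra.
Qed.

Lemma root_val_bounds (t s : R) :
  0 < t < 1 -> 0 < s <= n%:R ->
  let y := root_val n t s in [/\ quad t s y = 0, 0 < y & n%:R * y <= s].
Proof.
move=> /andP[t_gt0 t_lt1] /andP[s_gt0 s_le] y.
have n_pos : (0 : R) < n%:R by rewrite ltr0n.
have D_ge0 : 0 <= n%:R ^+ 2 - 4%:R * n%:R * t * (1 - t) * s.
  have a_le1 : 4%:R * t * (1 - t) <= 1 :> R.
    by have := sqr_ge0 (1 - 2 * t); lra.
  have a_ge0 : 0 <= 4%:R * t * (1 - t) :> R by rewrite !mulr_ge0 ?ler0n ?subr_ge0 ?ltW.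
  have as_le : 4%:R * t * (1 - t) * s <= n%:R by nra.
  have : 0 <= n%:R * (n%:R - 4%:R * t * (1 - t) * s) by apply: mulr_ge0; lra.
  lra.
have [q0 ty_le1] := quad_root_val t_gt0 D_ge0; rewrite -/y in q0 ty_le1; clearbody y.
have fact : n%:R * y * (1 - t * y) = (1 - t) * s.
  by rewrite -[RHS]subr0 -q0 /quad; ring.
have y_gt0 : 0 < y.
  have ty_lt1 : 0 < 1 - t * y by lra.
  have : 0 < n%:R * y by rewrite -(pmulr_lgt0 _ ty_lt1) fact mulr_gt0 // subr_gt0.
  by rewrite pmulr_rgt0.
have y_le1 : y <= 1.
  rewrite leNgt; apply/negP => y_gt1.
  have e : n%:R * t - n%:R + (1 - t) * s =
    quad t s y + n%:R * ((y - 1) * (1 - t * (1 + y))) by rewrite /quad; ring.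
  have s_defect : (1 - t) * (s - n%:R) <= 0 by apply: mulr_ge0_le0; lra.
  have : 0 < n%:R * ((y - 1) * (1 - t * (1 + y))) by rewrite !mulr_gt0 // subr_gt0; nra.
  lra.
split=> //.
have e : (1 - t) * (s - n%:R * y) = n%:R * t * y * (1 - y).
  by rewrite -[LHS]subr0 -q0 /quad; ring.
have y_ge0 := ltW y_gt0; have t_ge0 := ltW t_gt0.
have : 0 <= (1 - t) * (s - n%:R * y) by rewrite e !mulr_ge0 ?ler0n ?subr_ge0.
by rewrite pmulr_rge0 ?subr_ge0 ?subr_gt0.
Qed.

Lemma gval_bounds (t : R) :
  0 < t < 1 -> [/\ quad t 1 (gval n t) = 0, 0 < gval n t & n%:R * gval n t <= 1].
Proof. by move=> t01; apply: root_val_bounds; rewrite // ltr01 ler1n. Qed.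

(* The equation of a node whose only external input is s / n. *)
Lemma quad_node {t s x z : R} :
  t < 1 -> x = (1 - t) * z -> z - x * t * z = s / n%:R <-> quad t s x = 0.
Proof.
move=> t_lt1 ->.
have n_neq0 : n%:R != 0 :> R by rewrite pnatr_eq0 -lt0n.
have t_neq1 : 1 - t != 0 by rewrite subr_eq0 eq_sym lt_eqF.
have -> : quad t s ((1 - t) * z) =
    - ((1 - t) * n%:R) * (z - (1 - t) * z * t * z - s / n%:R).
  by rewrite /quad; field.
split=> [->|]; first by rewrite subrr mulr0.
move/eqP; rewrite mulf_eq0 oppr_eq0 mulf_eq0 (negbTE n_neq0) (negbTE t_neq1) /=.
by rewrite subr_eq0 => /eqP.
Qed.

End Quadratic.

Lemma gval_decreasing (R : rcfType) (n : nat) (t1 t2 : R) :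
  (1 < n)%N -> 0 < t1 -> t1 < t2 -> t2 < 1 -> gval n t2 < gval n t1.
Proof.
move=> n_gt1 t1_gt0 t12 t2_lt1; have n_gt0 := ltnW n_gt1.
have n_ge2 : (2 : R) <= n%:R by rewrite (ler_nat R 2).
have /(gval_bounds n_gt0)[q1 g1_gt0 g1_le] : 0 < t1 < 1 by apply/andP; split; lra.
have /(gval_bounds n_gt0)[q2 g2_gt0 g2_le] : 0 < t2 < 1 by apply/andP; split; lra.
move: (gval n t1) (gval n t2) q1 g1_gt0 g1_le q2 g2_gt0 g2_le.
move=> g1 g2 q1 g1_gt0 g1_le q2 g2_gt0 g2_le; rewrite ltNge; apply/negP => g12.
(* Both terms below are positive when g1 <= g2, since g1, g2 <= 1/n <= 1/2. *)
have e : (t2 - t1) * (1 - n%:R * g1 ^+ 2) + n%:R * (g2 - g1) * (1 - t2 * (g1 + g2))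
    = quad n t1 1 g1 - quad n t2 1 g2 by rewrite /quad; ring.
rewrite q1 q2 subrr in e.
have : 0 < (t2 - t1) * (1 - n%:R * g1 ^+ 2) by rewrite mulr_gt0 ?subr_gt0 //; nra.
have : 0 <= n%:R * (g2 - g1) * (1 - t2 * (g1 + g2)).
  by rewrite !mulr_ge0 ?ler0n ?subr_ge0 //; nra.
lra.
Qed.

Section StochasticMatrices.
Variables (R : rcfType) (n : nat).
Implicit Types (A C : 'M[R]_n) (theta : 'rV[R]_n) (x z : 'cV[R]_n).

Lemma Wmx_entry C x j i :
  Wmx C x j i = x j ord0 *+ (j == i) + (1 - x j ord0) * C j i.
Proof.
rewrite /Wmx; have -> : 1%:M - diag_mx x^T = diag_mx (\row_k (1 - x k ord0)).
  by apply/matrixP => a b; rewrite !mxE; case: (a == b); rewrite ?subr0.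
by rewrite mul_diag_mx !mxE.
Qed.

Lemma Wmx_row_sum C x j : (forall i, \sum_k C i k = 1) -> \sum_i Wmx C x j i = 1.
Proof.
move=> C_sum1; under eq_bigr do rewrite Wmx_entry.
rewrite big_split /= -mulr_sumr C_sum1 mulr1 (bigD1 j) //= eqxx mulr1n.
by rewrite big1 ?addr0 ?subrKC // => k /negbTE; rewrite eq_sym => ->.
Qed.

Lemma sum_Wmx C x theta z i :
  \sum_j Wmx C x j i * theta ord0 j * z j ord0 =
  x i ord0 * theta ord0 i * z i ord0 +
  \sum_j (1 - x j ord0) * C j i * theta ord0 j * z j ord0.
Proof.
under eq_bigr => j _ do rewrite Wmx_entry (mulrDl (x j ord0 *+ _)) mulrDl.
rewrite big_split /= (bigD1 i) //= eqxx mulr1n big1 ?addr0 //.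
by move=> j /negbTE ->; rewrite mulr0n !mul0r.
Qed.

Lemma row_stochastic_Wmx C x :
  row_stochastic C -> (forall i, 0 <= x i ord0 <= 1) -> row_stochastic (Wmx C x).
Proof.
move=> [C_ge0 C_sum1] x01; split=> [j i|j]; last exact: Wmx_row_sum.
have /andP[x_ge0 x_le1] := x01 j.
by rewrite Wmx_entry addr_ge0 ?mulrn_wge0 ?mulr_ge0 ?subr_ge0.
Qed.

(* A maximal entry of a left null vector of I - A^T Theta would be strictly
   contracted by the stochastic matrix A. *)
Lemma stochastic_left_kernel A theta (u : 'rV[R]_n) :
  row_stochastic A -> (forall i, 0 <= theta ord0 i < 1) ->
  u *m (1%:M - A^T *m Theta theta) = 0 -> u = 0.
Proof.
move=> [A_ge0 A_sum1] theta01 u_ker; apply/rowP => i0; rewrite mxE.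
have u_fix k : u ord0 k = (\sum_i u ord0 i * A k i) * theta ord0 k.
  move/rowP: u_ker => /(_ k); rewrite mulmxBr mulmx1 mulmxA /Theta mul_mx_diag.
  rewrite !mxE => /eqP; rewrite subr_eq0 => /eqP ->; congr (_ * _).
  by apply: eq_bigr => i _; rewrite !mxE.
have [k _ u_max] := @arg_maxP _ _ _ i0 xpredT (fun i => `|u ord0 i|) isT.
have /andP[th_ge0 th_lt1] := theta01 k.
have u_contr : `|u ord0 k| <= theta ord0 k * `|u ord0 k|.
  rewrite {1}u_fix normrM (ger0_norm th_ge0) mulrC ler_wpM2l //.
  apply: le_trans (ler_norm_sum _ _ _) _.
  rewrite -[X in _ <= X]mulr1 -(A_sum1 k) mulr_sumr; apply: ler_sum => i _.
  rewrite normrM (ger0_norm (A_ge0 k i)); apply: ler_wpM2r; [exact: A_ge0 | exact: u_max].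
have u_k0 : `|u ord0 k| <= 0.
  by rewrite -(@pmulr_rle0 _ (1 - theta ord0 k)) ?subr_gt0 // mulrBl mul1r subr_le0.
by apply/eqP; rewrite -normr_le0 (le_trans (u_max i0 isT)).
Qed.

Lemma unitmx_stochastic A theta :
  row_stochastic A -> (forall i, 0 <= theta ord0 i < 1) ->
  1%:M - A^T *m Theta theta \in unitmx.
Proof.
move=> A_stoch theta01; rewrite -row_free_unit -kermx_eq0 -submx0.
apply/row_subP => i; have /sub_kermxP := row_sub i (kermx (1%:M - A^T *m Theta theta)).
by move/(stochastic_left_kernel A_stoch theta01) ->; rewrite sub0mx.
Qed.

End StochasticMatrices.

Section Equilibria.
Variables (R : rcfType) (n : nat) (C : 'M[R]_n) (theta : 'rV[R]_n).
Hypotheses (C_stoch : row_stochastic C) (theta01 : forall i, 0 <= theta ord0 i < 1).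
Implicit Types (x z : 'cV[R]_n).

Definition power_eqs x z : Prop :=
  (forall i, x i ord0 = (1 - theta ord0 i) * z i ord0) /\
  (forall i, z i ord0 - \sum_j Wmx C x j i * theta ord0 j * z j ord0 = n%:R^-1).

Lemma simplex_entry_bounds x : in_simplex x -> forall i, 0 <= x i ord0 <= 1.
Proof.
move=> [x_ge0 x_sum1] i; rewrite x_ge0 -x_sum1 (bigD1 i) //= lerDl.
exact: sumr_ge0.
Qed.

Lemma power_eqs_coord x z :
  power_eqs x z <->
  x = (1%:M - Theta theta) *m z /\
  (1%:M - (Wmx C x)^T *m Theta theta) *m z = one_n R n.
Proof.
have xE i : ((1%:M - Theta theta) *m z) i ord0 = (1 - theta ord0 i) * z i ord0.
  by rewrite mulmxBl mul1mx mul_diag_mx !mxE mulrBl mul1r.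
have eqE i : ((1%:M - (Wmx C x)^T *m Theta theta) *m z) i ord0 =
    z i ord0 - \sum_j Wmx C x j i * theta ord0 j * z j ord0.
  rewrite mulmxBl mul1mx mul_mx_diag !mxE; congr (_ - _).
  by apply: eq_bigr => j _; rewrite !mxE.
split=> [[x_eq z_eq]|[x_eq z_eq]]; last first.
  by split=> i; rewrite -?eqE ?z_eq ?mxE // x_eq xE.
split; apply/matrixP => i j; rewrite (ord1 j) ?xE ?eqE //.
by rewrite z_eq mxE.
Qed.

Let unitmx_power x : in_simplex x ->
  1%:M - (Wmx C x)^T *m Theta theta \in unitmx.
Proof.
by move=> /simplex_entry_bounds x01; apply/unitmx_stochastic/theta01/row_stochastic_Wmx.
Qed.

Definition power_z x : 'cV[R]_n :=
  invmx (1%:M - (Wmx C x)^T *m Theta theta) *m one_n R n.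

Lemma equilibrium_power_eqs x :
  equilibrium_power C theta x -> in_simplex x /\ power_eqs x (power_z x).
Proof.
case=> [[x_simplex [_ x_fix]] | [V [_ [x_simplex [V_fix x_eq]]]]]; split=> //;
  apply/power_eqs_coord; rewrite mulKVmx ?unitmx_power //; split=> //.
  by rewrite -[LHS]x_fix /Fmap mulmxA.
have VM : V^T *m (1%:M - (Wmx C x)^T *m Theta theta) = 1%:M - Theta theta.
  have : (1%:M - Theta theta *m Wmx C x) *m V = 1%:M - Theta theta.
    by rewrite mulmxBl mul1mx {1}V_fix addrC addKr.
  by move/(congr1 trmx); rewrite trmx_mul !linearB /= !trmx1 trmx_mul /Theta tr_diag_mx.
by rewrite /power_z mulmxA -VM mulmxK ?unitmx_power // x_eq.
Qed.

Lemma power_eqs_equilibrium x z :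
  in_simplex x -> power_eqs x z -> equilibrium_power C theta x.
Proof.
move=> x_simplex /power_eqs_coord[x_eq z_eq]; left; have unitM := unitmx_power x_simplex.
by split; [|split] => //; rewrite /Fmap -mulmxA -z_eq mulKmx.
Qed.

Lemma power_eqs_sum x z : (0 < n)%N -> power_eqs x z -> \sum_i x i ord0 = 1.
Proof.
move=> n_gt0 [x_eq z_eq].
have : \sum_i (z i ord0 - \sum_j Wmx C x j i * theta ord0 j * z j ord0) = 1.
  under eq_bigr do rewrite z_eq.
  by rewrite sumr_const card_ord -[LHS]mulr_natr mulVf // pnatr_eq0 -lt0n.
rewrite sumrB exchange_big /=.
under [X in _ - X]eq_bigr => j _ do
  rewrite -!mulr_suml (Wmx_row_sum _ _ (proj2 C_stoch)) mul1r.
rewrite -sumrB => <-; apply: eq_bigr => i _; rewrite x_eq; ring.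
Qed.

Lemma power_eqs_gt0 x z :
  (0 < n)%N -> in_simplex x -> power_eqs x z -> forall i, 0 < z i ord0.
Proof.
move=> n_gt0 x_simplex [x_eq z_eq] i.
have z_ge0 j : 0 <= z j ord0.
  have /andP[x_ge0 _] := simplex_entry_bounds x_simplex j.
  have /andP[_ th_lt1] := theta01 j.
  by move: x_ge0; rewrite x_eq pmulr_rge0 // subr_gt0.
have W_stoch := row_stochastic_Wmx C_stoch (simplex_entry_bounds x_simplex).
have : 0 <= \sum_j Wmx C x j i * theta ord0 j * z j ord0.
  apply: sumr_ge0 => j _; rewrite !mulr_ge0 //; first exact: (proj1 W_stoch).
  by case/andP: (theta01 j).
have : (0 : R) < n%:R^-1 by rewrite invr_gt0 ltr0n.
have := z_eq i; lra.
Qed.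

End Equilibria.

Lemma int_simplex_lt1 (R : rcfType) (n : nat) (x : 'cV[R]_n) :
  (1 < n)%N -> in_int_simplex x -> forall i, x i ord0 < 1.
Proof.
move=> n_gt1 [x_gt0 x_sum1] i.
have : (0 < #|predC1 i|)%N by rewrite cardC1 card_ord -ltnS prednK // ltnW.
case/card_gt0P => k /= ki.
rewrite -x_sum1 (bigD1 i) //= ltrDl (bigD1 k) //= ltr_wpDr //.
by apply: sumr_ge0 => j _; apply: ltW.
Qed.

Section Star.
Variables (R : rcfType) (n : nat) (C : 'M[R]_n) (theta : 'rV[R]_n) (l : 'I_n).
Hypotheses (C_stoch : row_stochastic C) (C_diag0 : zero_diag C)
  (C_star : star_topology C l).
Hypotheses (theta01 : forall i, 0 <= theta ord0 i < 1) (theta_l_gt0 : 0 < theta ord0 l).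
Implicit Types (x z : 'cV[R]_n).

Definition xi_val x : R :=
  n%:R - #|[set i : 'I_n | theta ord0 i == 0]|%:R
  - n%:R * \sum_(j | (0 < theta ord0 j) && (j != l)) x j ord0.

Lemma star_leaf_col i j : i != l -> j != l -> C j i = 0.
Proof.
move=> il jl; apply/eqP; rewrite eq_le (proj1 C_stoch) andbT leNgt.
by apply/negP => /C_star[/eqP|/eqP]; rewrite ?(negbTE il) ?(negbTE jl).
Qed.

Lemma star_to_center j : j != l -> C j l = 1.
Proof.
move=> jl; rewrite -(proj2 C_stoch j) (bigD1 l) //= big1 ?addr0 // => k kl.
exact: star_leaf_col.
Qed.

Lemma sum_Wmx_leaf x z i : i != l ->
  \sum_j Wmx C x j i * theta ord0 j * z j ord0 =
  x i ord0 * theta ord0 i * z i ord0 +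
  (1 - x l ord0) * C l i * theta ord0 l * z l ord0.
Proof.
move=> il; rewrite sum_Wmx (bigD1 l) //= big1 ?addr0 // => j jl.
by rewrite star_leaf_col // mulr0 !mul0r.
Qed.

Lemma sum_Wmx_center x z :
  \sum_j Wmx C x j l * theta ord0 j * z j ord0 =
  x l ord0 * theta ord0 l * z l ord0 +
  \sum_(j | j != l) (1 - x j ord0) * theta ord0 j * z j ord0.
Proof.
rewrite sum_Wmx (bigD1 l) //= C_diag0 mulr0 !mul0r add0r.
by congr (_ + _); apply: eq_bigr => j jl; rewrite star_to_center // mulr1.
Qed.

Lemma card_followers_leaves :
  #|[set i : 'I_n | theta ord0 i == 0]|%:R +
  \sum_(j | (0 < theta ord0 j) && (j != l)) 1 + 1 = n%:R :> R.
Proof.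
have -> : n%:R = \sum_(j < n) 1 :> R by rewrite sumr_const card_ord.
rewrite [RHS](bigID (fun j => theta ord0 j == 0)) /= [X in _ = _ + X](bigD1 l) /= ?gt_eqF //.
rewrite -sum1_card natr_sum (addrC 1) -addrA; congr (_ + (_ + _)).
  by apply: eq_bigl => j; rewrite inE.
apply: eq_bigl => j; rewrite lt0r.
by case/andP: (theta01 j) => ->; rewrite andbT.
Qed.

(* A stubborn leaf j passes n^-1 - x_j on to the center, a follower nothing. *)
Lemma center_eq_xi x z :
  (forall j, x j ord0 = (1 - theta ord0 j) * z j ord0) ->
  (forall j, 0 < theta ord0 j -> j != l ->
     z j ord0 - x j ord0 * theta ord0 j * z j ord0 = n%:R^-1) ->
  z l ord0 - x l ord0 * theta ord0 l * z l ord0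
    - \sum_(j | j != l) (1 - x j ord0) * theta ord0 j * z j ord0 = n%:R^-1 <->
  z l ord0 - x l ord0 * theta ord0 l * z l ord0 = xi_val x / n%:R.
Proof.
move=> x_eq leaf_eq.
have n_neq0 : n%:R != 0 :> R by rewrite pnatr_eq0 -lt0n (leq_ltn_trans (leq0n l)).
have -> : \sum_(j | j != l) (1 - x j ord0) * theta ord0 j * z j ord0 =
    n%:R^-1 * \sum_(j | (0 < theta ord0 j) && (j != l)) 1 -
    \sum_(j | (0 < theta ord0 j) && (j != l)) x j ord0.
  rewrite mulr_sumr -sumrB (bigID (fun j => theta ord0 j == 0)) /=.
  rewrite big1 ?add0r => [|j /andP[_ /eqP->]]; last by rewrite mulr0 mul0r.
  apply: eq_big => [j|j /andP[jl th_neq0]].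
    by rewrite andbC lt0r; case/andP: (theta01 j) => ->; rewrite andbT.
  have th_gt0 : 0 < theta ord0 j by rewrite lt0r th_neq0; case/andP: (theta01 j).
  by rewrite mulr1 -(leaf_eq j th_gt0 jl) x_eq; ring.
have -> : xi_val x / n%:R = n%:R^-1 +
    n%:R^-1 * \sum_(j | (0 < theta ord0 j) && (j != l)) 1 -
    \sum_(j | (0 < theta ord0 j) && (j != l)) x j ord0.
  by rewrite /xi_val -[X in X - _ - _]card_followers_leaves; field.
by split; lra.
Qed.

Hypothesis n_gt1 : (1 < n)%N.
Hypothesis leaves_isolated : forall i, 0 < theta ord0 i -> i != l -> C l i = 0.

Let n_gt0 : (0 < n)%N. Proof. exact: ltnW. Qed.

Definition xi_star : R :=
  n%:R - #|[set i : 'I_n | theta ord0 i == 0]|%:R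
  - n%:R * \sum_(j | (0 < theta ord0 j) && (j != l)) gval n (theta ord0 j).

Definition star_power : 'cV[R]_n :=
  \col_i (if (0 < theta ord0 i) && (i != l) then gval n (theta ord0 i)
          else if i == l then root_val n (theta ord0 l) xi_star
          else n%:R^-1 + (xi_star / n%:R - root_val n (theta ord0 l) xi_star) * C l i).

Section StarEquilibrium.
Variable x : 'cV[R]_n.
Hypothesis x_equilibrium : equilibrium_power C theta x.
Let z := power_z C theta x.
Let x_simplex : in_simplex x := proj1 (equilibrium_power_eqs C_stoch theta01 x_equilibrium).
Let xz_eqs : power_eqs C theta x z := proj2 (equilibrium_power_eqs C_stoch theta01 x_equilibrium).
Let x_eq := proj1 xz_eqs.

Lemma star_leaf_eq i : i != l ->
  z i ord0 - x i ord0 * theta ord0 i * z i ord0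
    - (1 - x l ord0) * C l i * theta ord0 l * z l ord0 = n%:R^-1.
Proof. by move=> il; rewrite -(proj2 xz_eqs i) sum_Wmx_leaf // opprD addrA. Qed.

Lemma star_center_eq :
  z l ord0 - x l ord0 * theta ord0 l * z l ord0
    - \sum_(j | j != l) (1 - x j ord0) * theta ord0 j * z j ord0 = n%:R^-1.
Proof. by rewrite -(proj2 xz_eqs l) sum_Wmx_center opprD addrA. Qed.

Lemma star_z_gt0 i : 0 < z i ord0.
Proof. exact: (power_eqs_gt0 C_stoch theta01 n_gt0 x_simplex xz_eqs i). Qed.

Lemma star_int_simplex : in_int_simplex x.
Proof.
split=> [i|]; last exact: (proj2 x_simplex).
rewrite x_eq mulr_gt0 ?star_z_gt0 // subr_gt0.
by case/andP: (theta01 i).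
Qed.

Lemma follower_power i : theta ord0 i = 0 ->
  x i ord0 = n%:R^-1 + C l i * ((1 - x l ord0) * theta ord0 l * z l ord0).
Proof.
move=> th0; have il : i != l by apply: contraTneq theta_l_gt0 => <-; rewrite th0 ltxx.
have zi : z i ord0 = x i ord0 by rewrite x_eq th0 subr0 mul1r.
by have := star_leaf_eq il; rewrite th0 mulr0 mul0r subr0 zi => <-; ring.
Qed.

Lemma stubborn_leaf_power i : 0 < theta ord0 i -> i != l -> C l i = 0 ->
  x i ord0 = gval n (theta ord0 i).
Proof.
move=> th_gt0 il Cli0; have /andP[_ th_lt1] := theta01 i.
have := star_leaf_eq il; rewrite Cli0 mulr0 !mul0r subr0 -[n%:R^-1]div1r.
move/(quad_node n_gt0 th_lt1 (x_eq i)) => q0.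
apply: (quad_root_lt1 n_gt0 _ _ (int_simplex_lt1 n_gt1 star_int_simplex i) q0).
  by rewrite th_gt0.
by rewrite ler1n.
Qed.

Lemma follower_power_cases i : theta ord0 i = 0 ->
  (C l i = 0 -> x i ord0 = n%:R^-1) /\ (C l i <> 0 -> n%:R^-1 < x i ord0).
Proof.
move=> th0; rewrite follower_power //; split=> [->|/eqP Cli_neq0]; first by rewrite mul0r addr0.
have xl_lt1 := int_simplex_lt1 n_gt1 star_int_simplex l.
rewrite ltrDl mulr_gt0 ?mulr_gt0 ?star_z_gt0 ?subr_gt0 //.
by rewrite lt0r Cli_neq0 (proj1 C_stoch).
Qed.

Lemma star_center_load :
  z l ord0 - x l ord0 * theta ord0 l * z l ord0 = xi_val x / n%:R.
Proof.
apply/center_eq_xi; [exact: x_eq | | exact: star_center_eq].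
move=> j th_gt0 jl; have := star_leaf_eq jl.
by rewrite leaves_isolated // mulr0 !mul0r subr0.
Qed.

Lemma center_power : x l ord0 = root_val n (theta ord0 l) (xi_val x).
Proof.
have /andP[_ th_lt1] := theta01 l.
have /(quad_node n_gt0 th_lt1 (x_eq l)) q0 := star_center_load.
apply: (quad_root_lt1 n_gt0 _ _ (int_simplex_lt1 n_gt1 star_int_simplex l) q0).
  by rewrite theta_l_gt0.
rewrite /xi_val -addrA -opprD gerDl oppr_le0 addr_ge0 ?ler0n // mulr_ge0 ?ler0n //.
by apply: sumr_ge0 => j _; apply: ltW; case: star_int_simplex.
Qed.

Lemma center_outflow :
  (1 - x l ord0) * theta ord0 l * z l ord0 = xi_val x / n%:R - x l ord0.
Proof. by rewrite -star_center_load x_eq; ring. Qed.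

Lemma follower_power_center i : theta ord0 i = 0 ->
  x i ord0 = n%:R^-1 + (xi_val x / n%:R - x l ord0) * C l i.
Proof. by move=> th0; rewrite follower_power // center_outflow mulrC. Qed.

Lemma equilibrium_star_power : x = star_power.
Proof.
have xi_eq : xi_val x = xi_star.
  rewrite /xi_val /xi_star; congr (_ - _ * _); apply: eq_bigr => j /andP[th_gt0 jl].
  exact: stubborn_leaf_power th_gt0 jl (leaves_isolated th_gt0 jl).
apply/matrixP => i j; rewrite (ord1 j) mxE.
case: ifPn => [/andP[th_gt0 il] | not_stubborn].
  exact: stubborn_leaf_power th_gt0 il (leaves_isolated th_gt0 il).
case: eqVneq => [->|il]; first by rewrite center_power xi_eq.
have th0 : theta ord0 i = 0.
  apply/eqP; rewrite eq_le (proj1 (andP (theta01 i))) andbT leNgt.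
  by apply: contra not_stubborn => ->.
by rewrite follower_power_center // center_power xi_eq.
Qed.

End StarEquilibrium.

Let gval_leaf j : 0 < theta ord0 j ->
  [/\ quad n (theta ord0 j) 1 (gval n (theta ord0 j)) = 0,
      0 < gval n (theta ord0 j) & n%:R * gval n (theta ord0 j) <= 1].
Proof. by move=> th_gt0; apply: gval_bounds; rewrite // th_gt0; case/andP: (theta01 j). Qed.

Lemma xi_star_bounds : 1 <= xi_star <= n%:R.
Proof.
apply/andP; split.
  have -> : xi_star = 1 + \sum_(j | (0 < theta ord0 j) && (j != l))
                         (1 - n%:R * gval n (theta ord0 j)).
    by rewrite /xi_star -[X in X - _ - _]card_followers_leaves sumrB -mulr_sumr; ring.
  rewrite lerDl; apply: sumr_ge0 => j /andP[th_gt0 _].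
  by case: (gval_leaf th_gt0) => _ _; rewrite subr_ge0.
rewrite /xi_star -addrA -opprD gerDl oppr_le0 addr_ge0 ?ler0n // mulr_ge0 ?ler0n //.
by apply: sumr_ge0 => j /andP[th_gt0 _]; case: (gval_leaf th_gt0) => _ /ltW.
Qed.

Let y_star := root_val n (theta ord0 l) xi_star.

Let y_star_bounds :
  [/\ quad n (theta ord0 l) xi_star y_star = 0, 0 < y_star & n%:R * y_star <= xi_star].
Proof.
apply: (root_val_bounds n_gt0); first by rewrite theta_l_gt0; case/andP: (theta01 l).
by have /andP[xi_ge1 ->] := xi_star_bounds; rewrite (lt_le_trans ltr01).
Qed.

Lemma star_power_ge0 i : 0 <= star_power i ord0.
Proof.
have [_ y_gt0 ny_le] := y_star_bounds.
rewrite mxE; case: ifPn => [/andP[th_gt0 _]|_].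
  by case: (gval_leaf th_gt0) => _ /ltW.
case: eqVneq => _; first exact: ltW.
rewrite addr_ge0 ?invr_ge0 ?ler0n // mulr_ge0 ?(proj1 C_stoch) // subr_ge0.
by rewrite ler_pdivlMr ?ltr0n // mulrC.
Qed.

Let z_star : 'cV[R]_n := \col_i (star_power i ord0 / (1 - theta ord0 i)).

Lemma star_power_eqs : power_eqs C theta star_power z_star.
Proof.
have [y_quad _ _] := y_star_bounds.
have x_eq i : star_power i ord0 = (1 - theta ord0 i) * z_star i ord0.
  have /andP[_ th_lt1] := theta01 i.
  by rewrite /z_star [in RHS]mxE mulrC divfK // subr_eq0 eq_sym lt_eqF.
have x_l : star_power l ord0 = y_star by rewrite mxE eqxx andbF.
have x_stub j : 0 < theta ord0 j -> j != l -> star_power j ord0 = gval n (theta ord0 j).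
  by move=> th_gt0 jl; rewrite mxE th_gt0 jl.
have leaf_load j : 0 < theta ord0 j -> j != l ->
    z_star j ord0 - star_power j ord0 * theta ord0 j * z_star j ord0 = n%:R^-1.
  move=> th_gt0 jl; have /andP[_ th_lt1] := theta01 j.
  rewrite -div1r; apply/(quad_node n_gt0 th_lt1 (x_eq j)).
  by rewrite x_stub //; case: (gval_leaf th_gt0).
have center_load :
    z_star l ord0 - star_power l ord0 * theta ord0 l * z_star l ord0 = xi_star / n%:R.
  have /andP[_ th_lt1] := theta01 l.
  by apply/(quad_node n_gt0 th_lt1 (x_eq l)); rewrite x_l.
split=> // i; case: (eqVneq i l) => [->|il].
  rewrite sum_Wmx_center opprD addrA; apply/center_eq_xi => //.
  rewrite center_load; congr (_ / _); rewrite /xi_val /xi_star; congr (_ - _ * _).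
  by apply: eq_bigr => j /andP[th_gt0 jl]; rewrite x_stub.
rewrite sum_Wmx_leaf // opprD addrA.
have [th_gt0|th_le0] := ltP 0 (theta ord0 i).
  by rewrite leaves_isolated // mulr0 !mul0r subr0 leaf_load.
have th0 : theta ord0 i = 0 by apply/eqP; rewrite eq_le th_le0; case/andP: (theta01 i).
have b_l : (1 - star_power l ord0) * theta ord0 l * z_star l ord0 = xi_star / n%:R - y_star.
  by rewrite -center_load -x_l x_eq; ring.
have -> : z_star i ord0 = star_power i ord0 by rewrite x_eq th0 subr0 mul1r.
rewrite th0 mulr0 mul0r subr0.
transitivity (star_power i ord0 -
  C l i * ((1 - star_power l ord0) * theta ord0 l * z_star l ord0)); first ring.
rewrite b_l [star_power i ord0]mxE ifN ?(negbTE il) 1?mulrC ?addrK //.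
by rewrite th0 ltxx.
Qed.

Lemma star_power_equilibrium : equilibrium_power C theta star_power.
Proof.
apply: (power_eqs_equilibrium C_stoch theta01 _ star_power_eqs).
by split; [exact: star_power_ge0 | exact: power_eqs_sum star_power_eqs].
Qed.

End Star.

Theorem theorem3 (R : rcfType) (n : nat) (C : 'M[R]_n) (theta : 'rV[R]_n)
    (l : 'I_n) :
  (2 <= n)%N ->
  row_stochastic C -> zero_diag C ->
  (forall i, 0 <= theta ord0 i <= 1) ->
  (forall i, theta ord0 i < 1) ->
  (exists j, 0 < theta ord0 j) ->
  star_topology C l ->
  0 < theta ord0 l < 1 ->
  (forall x : 'cV[R]_n, equilibrium_power C theta x ->
     in_int_simplex x /\
     (forall i, theta ord0 i = 0 ->
        (C l i = 0 -> x i ord0 = n%:R^-1) /\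
        (C l i <> 0 -> n%:R^-1 < x i ord0)) /\
     (forall i, 0 < theta ord0 i -> i <> l -> C l i = 0 ->
        x i ord0 = gval n (theta ord0 i))) /\
  (forall t1 t2 : R, 0 < t1 -> t1 < t2 -> t2 < 1 -> gval n t2 < gval n t1) /\
  ((forall i, 0 < theta ord0 i -> i <> l -> C l i = 0) ->
     exists x : 'cV[R]_n,
       equilibrium_power C theta x /\
       (forall y, equilibrium_power C theta y -> y = x) /\
       let r := #|[set i : 'I_n | theta ord0 i == 0]| in
       let xi := n%:R - r%:R
                 - n%:R * \sum_(j | (0 < theta ord0 j) && (j != l)) x j ord0 in
       (forall i, 0 < theta ord0 i -> i <> l -> x i ord0 = gval n (theta ord0 i)) /\
       x l ord0 = root_val n (theta ord0 l) xi /\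
       (forall i, theta ord0 i = 0 ->
          x i ord0 = n%:R^-1 + (xi / n%:R - x l ord0) * C l i)).
Proof.
move=> n_gt1 C_stoch C_diag0 theta_01 theta_lt1 _ C_star /andP[theta_l_gt0 _].
have theta01 i : 0 <= theta ord0 i < 1.
  by rewrite theta_lt1 andbT; case/andP: (theta_01 i).
split.
  move=> x x_equilibrium; split; first by apply: (star_int_simplex C_stoch theta01).
  split=> [i|i th_gt0 /eqP il]; first by apply: (follower_power_cases C_stoch C_star theta01).
  by apply: (stubborn_leaf_power C_stoch C_star theta01).
split=> [t1 t2|isolated]; first exact: gval_decreasing.
have leaves_isolated i : 0 < theta ord0 i -> i != l -> C l i = 0.
  by move=> th_gt0 /eqP; apply: isolated.
have := star_power_equilibrium C_stoch C_diag0 C_star theta01 theta_l_gt0 n_gt1 leaves_isolated.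
set x := star_power C theta l => x_equilibrium.
exists x; split=> //; split.
  by move=> y y_equilibrium; apply: (equilibrium_star_power C_stoch C_diag0 C_star theta01).
split=> [i th_gt0 /eqP il|].
  by apply: (stubborn_leaf_power C_stoch C_star theta01); rewrite ?leaves_isolated.
split; first by apply: (center_power C_stoch C_diag0 C_star theta01).
by move=> i th0; apply: (follower_power_center C_stoch C_diag0 C_star theta01).
Qed.
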